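(* Let $G$ be a finite, simple, connected graph on $n$ vertices, with adjacency entries $a_{uv}$ and degrees $d_u$, and let $0=\lambda_0<\lambda_1\le\dots\le\lambda_{n-1}$ be the eigenvalues of its graph Laplacian. Let $k$ be an integer with $1\le k<n$, and let $\mathfrak{M}_0$ be any set of $n(k-1)$ ordered pairs $(u,v)$ of distinct vertices. Then $$\sum_{j=1}^{k-1}\lambda_j\le \frac{1}{2n}\sum_{(u,v)\in\mathfrak{M}_0}\big(d_u+d_v+2a_{uv}\big).$$
   Context: $a_{uv}=1$ if $u$ and $v$ are adjacent and $0$ otherwise; the graph Laplacian is $H=\mathrm{Deg}-A$ with $\mathrm{Deg}$ the diagonal degree matrix; its eigenvalues are listed with multiplicity in nondecreasing order, indexed from $0$. *)

From HB Require Import structures.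
From mathcomp Require Import all_boot all_order all_algebra.
Set Implicit Arguments. Unset Strict Implicit. Unset Printing Implicit Defensive.
Import Order.TTheory GRing.Theory Num.Theory.
Local Open Scope ring_scope.

Definition simple_graph (n : nat) (e : rel 'I_n) : Prop :=
  symmetric e /\ irreflexive e.

Definition connected_graph (n : nat) (e : rel 'I_n) : Prop :=
  forall u v : 'I_n, connect e u v.

Definition deg (n : nat) (e : rel 'I_n) (u : 'I_n) : nat := #|[set v | e u v]|.

Definition adj (n : nat) (e : rel 'I_n) (u v : 'I_n) : nat := nat_of_bool (e u v).

Definition adjmx (R : pzRingType) (n : nat) (e : rel 'I_n) : 'M[R]_n :=
  \matrix_(u, v) (adj e u v)%:R.

Definition degmx (R : pzRingType) (n : nat) (e : rel 'I_n) : 'M[R]_n :=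
  \matrix_(u, v) (if u == v then (deg e u)%:R else 0).

Definition laplacian (R : pzRingType) (n : nat) (e : rel 'I_n) : 'M[R]_n :=
  degmx R e - adjmx R e.

(* s is the list of eigenvalues of A, with multiplicity, in nondecreasing
   order (indexed from 0): s is sorted and the characteristic polynomial
   of A factors as prod_(x in s) (X - x). *)
Definition sorted_eigenvalues (R : numDomainType) (n : nat) (A : 'M[R]_n)
    (s : seq R) : Prop :=
  sorted <=%R s /\ char_poly A = \prod_(x <- s) ('X - x%:P).

From HB Require Import structures.
From mathcomp Require Import all_boot all_order all_algebra.
From mathcomp Require Import ring lra complex.
Set Implicit Arguments. Unset Strict Implicit. Unset Printing Implicit Defensive.
Import Order.TTheory GRing.Theory Num.Theory.
Local Open Scope ring_scope.
Local Open Scope sesquilinear_scope.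

(* The right-hand side is a sum of quadratic forms of the Laplacian H: for
   u <> v, d_u + d_v + 2 a_uv is the form of H at delta_u - delta_v.  Expanding
   H = sum_i lambda_i phi_i phi_i^* over an orthonormal eigenbasis turns it into
   sum_i lambda_i w_i with w_i = sum_{(u,v) in M0} |phi_i(u) - phi_i(v)|^2.  The
   weights satisfy 0 <= w_i <= 2n (since sum_{u,v} |phi_i(u) - phi_i(v)|^2 =
   2n - 2 |sum_u phi_i(u)|^2), sum_i w_i = 2 |M0| = 2n(k-1) by Parseval, and
   w_0 = 0 because on a connected graph the eigenvector of the least eigenvalue
   is constant.  Under these constraints sum_i lambda_i w_i is smallest when the
   weight 2n sits on lambda_1, ..., lambda_(k-1) (bathtub principle). *)

Section Bathtub.
Variable R : realFieldType.

Lemma sorted_sum_min_threshold (s : seq R) (m k : nat) : sorted <=%R s ->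
  (m <= k <= size s)%N ->
  \sum_(m <= j < size s) Num.min (s`_j - s`_k.-1) 0 =
  \sum_(m <= j < k) (s`_j - s`_k.-1).
Proof.
move=> s_sorted /andP[mk ks].
have s_le i j : (i <= j < size s)%N -> s`_i <= s`_j.
  case/andP=> ij js; apply: (sorted_leq_nth le_trans lexx) => //.
  by rewrite inE (leq_ltn_trans ij).
rewrite [LHS](big_cat_nat mk ks) /= [X in _ + X]big1_seq ?addr0; last first.
  move=> j /andP[_]; rewrite mem_index_iota => /andP[kj js].
  by apply/min_idPr; rewrite subr_ge0 s_le // js andbT (leq_trans (leq_pred k)).
apply: eq_big_nat => j /andP[_ jk]; apply/min_idPl.
case: k jk {mk} ks => // k jk ks.
by rewrite subr_le0 s_le // -ltnS jk.
Qed.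

Lemma ler_threshold_weighted_sum (I : finType) (P : pred I) (r w : I -> R)
    (c t : R) :
  (forall i, 0 <= w i <= c) ->
  c * \sum_(i | P i) Num.min (r i - t) 0 <= \sum_(i | P i) (r i - t) * w i.
Proof.
move=> w_bnd; rewrite mulr_sumr; apply: ler_sum => i _.
have /andP[w_ge0 w_le] := w_bnd i.
by have [r_t | r_t] := leP (r i - t) 0; [nra | rewrite mulr0; nra].
Qed.

Lemma bathtub (I : finType) (s : seq R) (r w : I -> R) (c : R) (k : nat)
    (i0 : I) :
  sorted <=%R s -> perm_eq s [seq r i | i <- enum I] -> (0 < k <= size s)%N ->
  (forall i, r i0 <= r i) -> (forall i, 0 <= w i <= c) ->
  \sum_i w i = c * (k.-1)%:R -> w i0 = 0 ->
  c * \sum_(1 <= j < k) s`_j <= \sum_i r i * w i.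
Proof.
move=> s_sorted s_perm k_bnd r_min w_bnd w_sum w_i0.
(* Both sides are compared through f, the amount by which a value lies below
   the threshold t := s_(k-1). *)
set t := s`_k.-1; pose f x := Num.min (x - t) 0.
have s_ne0 : (0 < size s)%N by case/andP: k_bnd => /leq_trans; apply.
have r_s0 : r i0 <= s`_0.
  have : s`_0 \in [seq r i | i <- enum I] by rewrite -(perm_mem s_perm) mem_nth.
  by case/mapP=> i _ ->.
have sum_f : \sum_(1 <= j < size s) f s`_j <= \sum_(i | i != i0) f (r i).
  have : \sum_(x <- s) f x = \sum_i f (r i).
    by rewrite (perm_big _ s_perm) big_map big_enum.
  rewrite (big_nth 0) big_ltn //= (bigD1 i0) //= => sum_eq.
  suff : f (r i0) <= f s`_0 by move: sum_eq; lra.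
  by rewrite /f le_min ge_min lerD2r r_s0 ge_min lexx orbT.
have c0 : 0 <= c by have /andP[/le_trans] := w_bnd i0; apply.
have split_r :
    \sum_i r i * w i = \sum_(i | i != i0) (r i - t) * w i + c * (k.-1)%:R * t.
  rewrite (bigD1 i0) //= w_i0 mulr0 add0r -w_sum mulr_suml.
  rewrite [X in _ + X](bigD1 i0) //= w_i0 mul0r add0r -big_split /=.
  by apply: eq_bigr => i _; ring.
have split_s :
    \sum_(1 <= j < k) s`_j = \sum_(1 <= j < size s) f s`_j + (k.-1)%:R * t.
  rewrite /f sorted_sum_min_threshold //.
  by rewrite sumrB sumr_const_nat subn1 mulr_natl subrK.
rewrite split_r split_s mulrDr mulrA lerD2r.
apply: le_trans _ (ler_threshold_weighted_sum (fun i => i != i0) r t w_bnd).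
by rewrite ler_wpM2l.
Qed.
End Bathtub.

Lemma char_poly_similar (F : fieldType) m (B U : 'M[F]_m) : U \in unitmx ->
  char_poly (invmx U *m B *m U) = char_poly B.
Proof.
move=> Uu; rewrite /char_poly /char_poly_mx !map_mxM.
set f := map_mx (@polyC F).
have fUU : f (invmx U) *m f U = 1%:M by rewrite -map_mxM mulVmx // map_mx1.
have -> : 'X%:M - f (invmx U) *m f B *m f U =
          f (invmx U) *m ('X%:M - f B) *m f U.
  rewrite mulmxBr mulmxBl; congr (_ - _).
  by rewrite scalar_mxC -mulmxA fUU mulmx1.
by rewrite !det_mulmx mulrAC -det_mulmx fUU det1 mul1r.
Qed.

Section NumClosedField.
Variable C : numClosedFieldType.

Lemma qform_sum m (M : 'M[C]_m) (x : 'rV[C]_m) :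
  (x *m M *m x^t*) 0 0 = \sum_u \sum_v x 0 u * M u v * (x 0 v)^*.
Proof.
rewrite mxE (eq_bigr (fun v => \sum_u x 0 u * M u v * (x 0 v)^*)).
  by rewrite exchange_big.
by move=> v _; rewrite !mxE big_distrl.
Qed.

Lemma sum_delta m (g : 'I_m -> C) u : \sum_b g b * (b == u)%:R = g u.
Proof.
rewrite (bigD1 u) //= eqxx mulr1 big1 ?addr0 // => b /negbTE ->.
by rewrite mulr0.
Qed.

Lemma row_norm2 m (y : 'rV[C]_m) : (y *m y^t*) 0 0 = \sum_j `|y 0 j| ^+ 2.
Proof. by rewrite mxE; apply: eq_bigr => j _; rewrite !mxE normCK. Qed.

Lemma sum_norm2_diff (I : finType) (q : I -> C) :
  \sum_u \sum_v `|q u - q v| ^+ 2 =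
  (2 * #|I|)%:R * \sum_u `|q u| ^+ 2 - 2 * `|\sum_u q u| ^+ 2.
Proof.
have expand u v : `|q u - q v| ^+ 2 =
   (`|q u| ^+ 2 + `|q v| ^+ 2) - (q u * (q v)^* + q v * (q u)^*).
  by rewrite !normCK rmorphB /=; ring.
have cross :
    \sum_u \sum_v (q u * (q v)^* + q v * (q u)^*) = 2 * `|\sum_u q u| ^+ 2.
  under eq_bigr do rewrite big_split /=.
  rewrite big_split /= [X in _ + X]exchange_big /=.
  have -> : \sum_u \sum_v q u * (q v)^* = `|\sum_u q u| ^+ 2.
    rewrite normCK rmorph_sum big_distrl /=.
    by apply: eq_bigr => u _; rewrite mulr_sumr.
  by rewrite mulr_natl mulr2n.
under eq_bigr do under eq_bigr do rewrite expand.
under eq_bigr do rewrite sumrB big_split /=.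
rewrite sumrB big_split /= [X in _ + X - _]exchange_big /= cross.
under eq_bigr do rewrite sumr_const.
by rewrite !sumrMnl -mulrnDr addnn -mul2n [in RHS]mulr_natl.
Qed.

End NumClosedField.

Definition edge_vec (C : nzRingType) n (u v : 'I_n) : 'rV[C]_n :=
  delta_mx 0 u - delta_mx 0 v.

Lemma edge_vecE (C : nzRingType) n (u v b : 'I_n) :
  edge_vec C u v 0 b = (b == u)%:R - (b == v)%:R.
Proof. by rewrite !mxE eqxx. Qed.

Lemma edge_vec_mulmx (C : nzRingType) n m (Q : 'M[C]_(n, m)) (u v : 'I_n) :
  edge_vec C u v *m Q = row u Q - row v Q.
Proof. by rewrite mulmxBl -!rowE. Qed.

Lemma edge_vec_norm (C : numClosedFieldType) n (u v : 'I_n) : u != v ->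
  \sum_a `|edge_vec C u v 0 a| ^+ 2 = 2.
Proof.
move=> uv; under eq_bigr do rewrite normCK edge_vecE rmorphB /= !conjC_nat mulrBr.
rewrite sumrB !sum_delta eqxx (negbTE uv) eq_sym (negbTE uv) /=.
by rewrite eqxx subr0 sub0r opprK.
Qed.

Lemma qform_edge_vec (C : numClosedFieldType) n (M : 'M[C]_n) (u v : 'I_n) :
  (edge_vec C u v *m M *m (edge_vec C u v)^t*) 0 0 =
  (M u u - M u v) - (M v u - M v v).
Proof.
rewrite qform_sum.
transitivity (\sum_a edge_vec C u v 0 a * (M a u - M a v)).
  apply: eq_bigr => a _.
  rewrite -[M a u](sum_delta (M a)) -[M a v](sum_delta (M a)) -sumrB mulr_sumr.
  by apply: eq_bigr => b _; rewrite (edge_vecE C u v b) rmorphB /= !conjC_nat; ring.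
rewrite (eq_bigr (fun a =>
  (M a u - M a v) * (a == u)%:R - (M a u - M a v) * (a == v)%:R)).
  by rewrite sumrB !sum_delta.
by move=> a _; rewrite edge_vecE mulrC mulrBr.
Qed.

Section Laplacian.
Variables (C : numClosedFieldType) (n : nat) (e : rel 'I_n).
Hypothesis e_sym : symmetric e.

Local Notation H := (laplacian C e).

Lemma laplacianE u v :
  H u v = (if u == v then (deg e u)%:R else 0) - (adj e u v)%:R.
Proof. by rewrite /laplacian !mxE. Qed.

Lemma adj_sym u v : adj e u v = adj e v u.
Proof. by rewrite /adj e_sym. Qed.

Lemma laplacian_hermsymmx : H \is hermsymmx.
Proof.
apply/is_hermitianmxP; rewrite expr0 scale1r; apply/matrixP => u v.
have -> : (H^t*) u v = (H v u)^* by rewrite !mxE.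
rewrite !laplacianE adj_sym eq_sym rmorphB /= conjC_nat.
by case: eqP => [->|_]; rewrite ?conjC_nat ?conjC0.
Qed.

Lemma deg_sum_adj u : (deg e u)%:R = \sum_v (adj e u v)%:R :> C.
Proof.
rewrite /deg /adj -natr_sum -sum1_card big_mkcond /=.
by congr (_%:R); apply: eq_bigr => v _; rewrite inE; case: (e u v).
Qed.

Lemma qform_laplacian (x : 'rV[C]_n) :
  (x *m H *m x^t*) 0 0 =
  \sum_u \sum_v (adj e u v)%:R * (x 0 u * (x 0 u)^* - x 0 u * (x 0 v)^*).
Proof.
rewrite qform_sum; apply: eq_bigr => u _.
under eq_bigr do rewrite laplacianE mulrBr mulrBl.
under [in RHS]eq_bigr do rewrite mulrBr.
rewrite !sumrB -mulr_suml -deg_sum_adj (bigD1 u) //= eqxx big1 ?addr0; last first.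
  by move=> v /negbTE; rewrite eq_sym => ->; rewrite mulr0 mul0r.
rewrite [X in _ - X](eq_bigr (fun v => (adj e u v)%:R * (x 0 u * (x 0 v)^*))).
  by rewrite mulrAC mulrC.
by move=> v _; rewrite mulrAC mulrC.
Qed.

Lemma qform_laplacian_dirichlet (x : 'rV[C]_n) :
  (x *m H *m x^t*) 0 0 =
  2^-1 * \sum_u \sum_v (adj e u v)%:R * `|x 0 u - x 0 v| ^+ 2.
Proof.
set S := \sum_u \sum_v _.
suff -> : S = (x *m H *m x^t*) 0 0 *+ 2.
  by rewrite -[(x *m _ *m _) 0 0 *+ 2]mulr_natl mulKf ?pnatr_eq0.
rewrite mulr2n !qform_laplacian [X in _ + X]exchange_big -big_split /=.
apply: eq_bigr => u _; rewrite -big_split /=; apply: eq_bigr => v _.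
by rewrite adj_sym -mulrDr normCK rmorphB /= adj_sym; congr (_ * _); ring.
Qed.

Lemma qform_laplacian_edge_vec u v : irreflexive e -> u != v ->
  (edge_vec C u v *m H *m (edge_vec C u v)^t*) 0 0 =
  ((deg e u + deg e v + 2 * adj e u v)%N)%:R.
Proof.
move=> e_irr uv; rewrite qform_edge_vec !laplacianE.
rewrite (negbTE uv) eq_sym (negbTE uv) !eqxx.
by rewrite /adj !e_irr e_sym /= 2!natrD natrM; ring.
Qed.

Local Notation P := (spectralmx H).
Local Notation D := (spectral_diag H).

Lemma laplacian_spectral : H = P^t* *m diag_mx D *m P.
Proof.
have /orthomx_spectralP E := hermitian_normalmx laplacian_hermsymmx.
by rewrite {1}E invmx_unitary ?spectral_unitarymx.
Qed.

Lemma qform_laplacian_spectral (x : 'rV[C]_n) :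
  (x *m H *m x^t*) 0 0 = \sum_i D 0 i * `|(x *m P^t*) 0 i| ^+ 2.
Proof.
have -> : x *m H *m x^t* = x *m P^t* *m diag_mx D *m (x *m P^t*)^t*.
  by rewrite {1}laplacian_spectral trmx_mul map_mxM trmxCK !mulmxA.
rewrite mxE; apply: eq_bigr => i _.
by rewrite mul_mx_diag !mxE normCK mulrCA mulrA.
Qed.

Lemma spectral_coord_norm (x : 'rV[C]_n) :
  \sum_i `|(x *m P^t*) 0 i| ^+ 2 = \sum_u `|x 0 u| ^+ 2.
Proof.
rewrite -!row_norm2 trmx_mul map_mxM trmxCK mulmxA.
by rewrite mulmxKtV ?spectral_unitarymx.
Qed.

Lemma spectral_row_norm i : \sum_u `|P i u| ^+ 2 = 1.
Proof.
have /matrixP/(_ i i) := unitarymxP (spectral_unitarymx H).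
rewrite !mxE eqxx mulr1n => <-.
by apply: eq_bigr => u _; rewrite !mxE normCK.
Qed.

Lemma qform_laplacian_row i : (row i P *m H *m (row i P)^t*) 0 0 = D 0 i.
Proof.
rewrite qform_laplacian_spectral -row_mul (unitarymxP (spectral_unitarymx H)).
rewrite -[RHS](sum_delta (D 0)); apply: eq_bigr => j _.
by rewrite !mxE eq_sym; case: eqP; rewrite ?normr1 ?normr0 ?expr1n ?expr0n.
Qed.

Lemma char_poly_laplacian : char_poly H = \prod_i ('X - (D 0 i)%:P).
Proof.
rewrite [in LHS]laplacian_spectral -invmx_unitary ?spectral_unitarymx //.
rewrite char_poly_similar ?spectral_unit // char_poly_trig ?diag_mx_is_trig //.
by apply: eq_bigr => i _; rewrite mxE eqxx.
Qed.

(* Test the all-ones vector, whose Dirichlet form vanishes. *)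
Lemma spectral_diag_min_le0 i0 : (0 < n)%N ->
  (forall i, D 0 i0 <= D 0 i) -> D 0 i0 <= 0.
Proof.
move=> n_gt0 D_min; pose x : 'rV[C]_n := const_mx 1.
have qx0 : (x *m H *m x^t*) 0 0 = 0.
  rewrite qform_laplacian_dirichlet big1 ?mulr0 // => u _; rewrite big1 // => v _.
  by rewrite !mxE subrr normr0 expr0n mulr0.
have norm_x : \sum_i `|(x *m P^t*) 0 i| ^+ 2 = n%:R.
  rewrite spectral_coord_norm (eq_bigr (fun _ => 1)) ?sumr_const ?card_ord //.
  by move=> u _; rewrite mxE normr1 expr1n.
have : D 0 i0 * n%:R <= 0.
  rewrite -qx0 qform_laplacian_spectral -norm_x mulr_sumr; apply: ler_sum => i _.
  by rewrite ler_wpM2r ?exprn_ge0.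
by rewrite pmulr_lle0 ?ltr0n.
Qed.

Lemma dirichlet_le0_const (x : 'rV[C]_n) : connected_graph e ->
  (x *m H *m x^t*) 0 0 <= 0 -> forall u v, x 0 u = x 0 v.
Proof.
move=> e_conn; rewrite qform_laplacian_dirichlet pmulr_rle0 ?invr_gt0 ?ltr0n //.
have term_ge0 u v : 0 <= (adj e u v)%:R * `|x 0 u - x 0 v| ^+ 2.
  by rewrite mulr_ge0 ?exprn_ge0.
move=> sum_le0.
have row_ge0 u : 0 <= \sum_v (adj e u v)%:R * `|x 0 u - x 0 v| ^+ 2.
  by apply: sumr_ge0 => v _; apply: term_ge0.
have /(psumr_eq0P (fun u _ => row_ge0 u)) rows0 :
    \sum_u \sum_v (adj e u v)%:R * `|x 0 u - x 0 v| ^+ 2 = 0.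
  by apply/le_anti; rewrite sum_le0 sumr_ge0.
have edge_eq u v : e u v -> x 0 u = x 0 v.
  move=> euv.
  have /(psumr_eq0P (fun v _ => term_ge0 u v))/(_ v isT) := rows0 u isT.
  by rewrite /adj euv mul1r => /eqP; rewrite sqrf_eq0 normr_eq0 subr_eq0 => /eqP.
move=> u v; have : closed e [pred w | x 0 w == x 0 u].
  by move=> a b /edge_eq; rewrite !inE => ->.
by move/closed_connect/(_ u v (e_conn u v)); rewrite !inE eqxx => /esym/eqP.
Qed.

Variable M0 : {set 'I_n * 'I_n}.

Definition spectral_weight i :=
  \sum_(p in M0) `|P i p.1 - P i p.2| ^+ 2.

Lemma spectral_weight_ge0 i : 0 <= spectral_weight i.
Proof. by apply: sumr_ge0 => p _; rewrite exprn_ge0. Qed.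

Lemma spectral_weight_le i : spectral_weight i <= (2 * n)%:R.
Proof.
apply: (@le_trans _ _ (\sum_p `|P i p.1 - P i p.2| ^+ 2)).
  rewrite [X in _ <= X](bigID (mem M0)) /= lerDl.
  by apply: sumr_ge0 => p _; rewrite exprn_ge0.
rewrite -(pair_bigA _ (fun u v => `|P i u - P i v| ^+ 2)) /= sum_norm2_diff.
by rewrite card_ord spectral_row_norm mulr1 gerBl mulr_ge0 ?exprn_ge0.
Qed.

Lemma spectral_edge_vec_coord u v i :
  (edge_vec C u v *m P^t*) 0 i = (P i u - P i v)^*.
Proof. by rewrite edge_vec_mulmx rmorphB !mxE. Qed.

Lemma spectral_weight_sum : (forall p, p \in M0 -> p.1 != p.2) ->
  \sum_i spectral_weight i = (2 * #|M0|)%:R.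
Proof.
move=> M0_offdiag; rewrite exchange_big /= mulnC natrM mulr_natl -sumr_const.
apply: eq_bigr => p /M0_offdiag uv.
under eq_bigr do rewrite -norm_conjC -spectral_edge_vec_coord.
by rewrite spectral_coord_norm edge_vec_norm.
Qed.

Lemma edge_sum_spectral : irreflexive e -> (forall p, p \in M0 -> p.1 != p.2) ->
  \sum_(p in M0) ((deg e p.1 + deg e p.2 + 2 * adj e p.1 p.2)%N)%:R =
  \sum_i D 0 i * spectral_weight i.
Proof.
move=> e_irr M0_offdiag; under eq_bigr => p /M0_offdiag uv.
  rewrite -qform_laplacian_edge_vec // qform_laplacian_spectral.
  under eq_bigr do rewrite spectral_edge_vec_coord norm_conjC.
over.
by rewrite exchange_big; apply: eq_bigr => i _; rewrite mulr_sumr.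
Qed.

Lemma spectral_weight_eq0 i0 : connected_graph e -> D 0 i0 <= 0 ->
  spectral_weight i0 = 0.
Proof.
move=> e_conn; rewrite -qform_laplacian_row.
move=> /(dirichlet_le0_const e_conn) row_const.
rewrite /spectral_weight big1 // => p _.
by have := row_const p.1 p.2; rewrite !mxE => ->; rewrite subrr normr0 expr0n.
Qed.

End Laplacian.

(* The spectral theorem is available over closed fields only: eigen-data of
   the real Laplacian is computed in R[i], where it is real. *)
Section RealLaplacian.
Variables (R : rcfType) (n : nat) (e : rel 'I_n).
Hypothesis e_sym : symmetric e.
Local Open Scope complex_scope.

Local Notation H := (laplacian R[i] e).
Local Notation D := (spectral_diag H).

Definition laplacian_eigenvalue i : R := complex.Re (D 0 i).

Definition edge_weight (M0 : {set 'I_n * 'I_n}) i : R :=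
  complex.Re (spectral_weight R[i] e M0 i).

Lemma laplacian_eigenvalueE i : (laplacian_eigenvalue i)%:C = D 0 i.
Proof.
apply: RRe_real.
have /mxOverP := hermitian_spectral_diag_real (laplacian_hermsymmx R[i] e_sym).
by apply.
Qed.

Lemma edge_weightE M0 i : (edge_weight M0 i)%:C = spectral_weight R[i] e M0 i.
Proof. exact/RRe_real/ger0_real/spectral_weight_ge0. Qed.

Lemma laplacian_eigenvalues_perm (s : seq R) :
  char_poly (laplacian R e) = \prod_(x <- s) ('X - x%:P) ->
  perm_eq s [seq laplacian_eigenvalue i | i <- enum 'I_n].
Proof.
move=> char_s; apply: (perm_map_inj (@complexI R)); apply: prod_XsubC_eq.
have map_H : map_mx (real_complex R) (laplacian R e) = H.
  apply/matrixP => u v; rewrite !mxE rmorphB /= !rmorph_nat.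
  by case: eqP => _; rewrite ?rmorph_nat ?rmorph0.
rewrite -map_comp !big_map -enumT big_enum /=.
under eq_bigr do rewrite -map_polyXsubC.
rewrite -rmorph_prod -char_s /= map_char_poly map_H char_poly_laplacian //.
by apply: eq_big => // i _; rewrite laplacian_eigenvalueE.
Qed.

Variable M0 : {set 'I_n * 'I_n}.
Hypothesis M0_offdiag : forall p, p \in M0 -> p.1 != p.2.

Lemma edge_sum_eigenvalues : irreflexive e ->
  \sum_(p in M0) ((deg e p.1 + deg e p.2 + 2 * adj e p.1 p.2)%N)%:R =
  \sum_i laplacian_eigenvalue i * edge_weight M0 i.
Proof.
move=> e_irr; apply: (@complexI R); rewrite !rmorph_sum /=.
under eq_bigr do rewrite rmorph_nat.
rewrite (edge_sum_spectral _ e_sym) //; apply: eq_bigr => i _.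
by rewrite rmorphM /= laplacian_eigenvalueE edge_weightE.
Qed.

Lemma edge_weight_bounds i : 0 <= edge_weight M0 i <= (2 * n)%:R.
Proof.
rewrite -!lecR edge_weightE rmorph0 rmorph_nat.
by rewrite spectral_weight_ge0 spectral_weight_le.
Qed.

Lemma edge_weight_sum : \sum_i edge_weight M0 i = (2 * #|M0|)%:R.
Proof.
apply: (@complexI R); rewrite rmorph_sum rmorph_nat /=.
under eq_bigr do rewrite edge_weightE.
exact: spectral_weight_sum.
Qed.

Lemma edge_weight_min_eq0 i0 : (0 < n)%N -> connected_graph e ->
  (forall i, laplacian_eigenvalue i0 <= laplacian_eigenvalue i) ->
  edge_weight M0 i0 = 0.
Proof.
move=> n_gt0 e_conn eig_min; apply: (@complexI R).
rewrite edge_weightE rmorph0 (spectral_weight_eq0 e_sym) //.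
apply: (spectral_diag_min_le0 e_sym n_gt0) => i.
by rewrite -!laplacian_eigenvalueE lecR.
Qed.

End RealLaplacian.

Theorem mainTheorem5 (R : rcfType) (n : nat) (e : rel 'I_n)
    (s : seq R) (k : nat) (M0 : {set 'I_n * 'I_n}) :
  simple_graph e ->
  connected_graph e ->
  sorted_eigenvalues (laplacian R e) s ->
  (1 <= k < n)%N ->
  #|M0| = (n * (k - 1))%N ->
  (forall p, p \in M0 -> p.1 != p.2) ->
  \sum_(1 <= j < k) s`_j <=
    (2 * n)%:R^-1 *
      \sum_(p in M0) ((deg e p.1 + deg e p.2 + 2 * adj e p.1 p.2)%N)%:R.
Proof.
move=> [e_sym e_irr] e_conn [s_sorted char_s] /andP[k_gt0 k_lt_n].
move=> card_M0 M0_offdiag.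
have n_gt0 : (0 < n)%N by apply: leq_ltn_trans k_lt_n.
have s_perm := laplacian_eigenvalues_perm e_sym char_s.
have size_s : size s = n by rewrite (perm_size s_perm) size_map size_enum_ord.
have [i0 _ eig_min] :=
  arg_minP (laplacian_eigenvalue R e) (i0 := Ordinal n_gt0) (P := xpredT) isT.
rewrite edge_sum_eigenvalues // ler_pdivlMl ?ltr0n ?muln_gt0 ?n_gt0 //.
apply: (bathtub s_sorted s_perm _ (fun i => eig_min i isT)
                (edge_weight_bounds R e M0)).
- by rewrite size_s k_gt0 ltnW.
- by rewrite edge_weight_sum // card_M0 mulnA natrM subn1.
- exact (edge_weight_min_eq0 e_sym M0 n_gt0 e_conn (fun i => eig_min i isT)).
Qed.
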